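(* The Hilbert series $\sum_{n\ge0}(\dim_k (A_k)_n)t^n$ of $A_k$ equals $(1-7t+7t^2-t^3)^{-1}$.
   Context: Let $k$ be a field. Label the points of the Fano plane by $1,\dots,7$ so that its directed lines are $123,145,167,246,275,374,365$. For $i,j,l\in\{1,\dots,7\}$ put $\varepsilon^{ijl}=1$ if $(i,j,l)$ is a cyclic rotation of one of these directed lines, $\varepsilon^{ijl}=-1$ if $(j,i,l)$ is such a cyclic rotation, and $\varepsilon^{ijl}=0$ otherwise. Let $A_k=k\langle x_1,\dots,x_7\rangle/(r_1,\dots,r_7)$, graded by $\deg x_i=1$, where $r_i=\sum_{m,n=1}^7\varepsilon^{imn}x_mx_n$; explicitly $r_1=[x_2,x_3]+[x_4,x_5]+[x_6,x_7]$, $r_2=[x_3,x_1]+[x_4,x_6]+[x_7,x_5]$, $r_3=[x_1,x_2]+[x_6,x_5]+[x_7,x_4]$, $r_4=[x_5,x_1]+[x_3,x_7]+[x_6,x_2]$, $r_5=[x_1,x_4]+[x_2,x_7]+[x_3,x_6]$, $r_6=[x_7,x_1]+[x_5,x_3]+[x_2,x_4]$, $r_7=[x_1,x_6]+[x_4,x_3]+[x_5,x_2]$. *)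

From HB Require Import structures.
From mathcomp Require Import all_boot all_order all_algebra.
Set Implicit Arguments. Unset Strict Implicit. Unset Printing Implicit Defensive.
Import Order.TTheory GRing.Theory Num.Theory.
Local Open Scope ring_scope.

(* Points of the Fano plane 1..7 are encoded as 'I_7 via i |-> i-1.
   Directed lines 123,145,167,246,275,374,365 (1-based). *)
Definition fano_lines : seq (nat * nat * nat) :=
  [:: (1,2,3); (1,4,5); (1,6,7); (2,4,6); (2,7,5); (3,7,4); (3,6,5)]%N.

Definition cyc_line (a b c : nat) : bool :=
  has (fun t => let: (x, y, z) := t in
        [|| (a, b, c) == (x, y, z), (a, b, c) == (y, z, x) | (a, b, c) == (z, x, y)])
      fano_lines.

Definition eps (i j l : 'I_7) : int :=
  if cyc_line i.+1 j.+1 l.+1 then 1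
  else if cyc_line j.+1 i.+1 l.+1 then -1 else 0.

(* Degree-n component of the free algebra k<x_1..x_7>: the k-vector space with
   basis the words of length n in the letters 'I_7 (x_{i+1} <-> i). *)
Definition Fdeg (k : fieldType) (n : nat) := {ffun n.-tuple 'I_7 -> k^o}.

(* The homogeneous element  u * r_i * v  of the free algebra, for words u, v,
   seen in degree n (it is 0 unless size u + 2 + size v = n). *)
Definition relvec (k : fieldType) (n : nat) (i : 'I_7) (u v : seq 'I_7) : Fdeg k n :=
  [ffun w : n.-tuple 'I_7 =>
     \sum_(m < 7) \sum_(l < 7)
        (eps i m l)%:~R * ((val w == u ++ [:: m; l] ++ v)%:R : k)].

(* Degree-n component of the two-sided ideal (r_1,...,r_7): since the r_i are
   homogeneous of degree 2, it is spanned by the u r_i v with words u, v. *)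
Definition ideal_deg (k : fieldType) (n : nat) : {vspace Fdeg k n} :=
  (\sum_(i : 'I_7) \sum_(p < n.+1) \sum_(u : p.-tuple 'I_7)
     \sum_(q < n.+1) \sum_(v : q.-tuple 'I_7) <[relvec k n i u v]>)%VS.

Definition hilb (k : fieldType) (n : nat) : nat :=
  (\dim (fullv : {vspace Fdeg k n}) - \dim (ideal_deg k n))%N.

Definition denom_coef (i : nat) : int := nth 0 [:: 1; -7; 7; -1] i.

(* Order the letters x1 < ... < x7 and words of equal length lexicographically.
   The leading words of r_1, ..., r_7 are x7x6, x7x5, ..., x7x1 and x6x1, all with
   coefficient +-1, and the only overlap between them, x7x6x1, is resolved by the
   identity sum_i r_i x_i = sum_i x_i r_i, which holds by the cyclic symmetry of
   epsilon.  By the diamond lemma the r_i thus form a Groebner basis: the degree-n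
   part of the ideal is spanned by one relation u r_i v per non-normal word (the one
   at its leftmost leading word), while every word is congruent to a combination of
   normal words; hence dim (A_k)_n is the number N_n of normal words of length n,
   whatever k is.  A normal word is a word in x1, ..., x6 avoiding x6x1 followed by
   a power of x7, whence N_(n+2) + N_n = 6 N_(n+1) + 1, i.e. the Hilbert series is
   1/((1-t)(1-6t+t^2)) = 1/(1-7t+7t^2-t^3). *)

From mathcomp Require Import all_boot all_order all_algebra.
From mathcomp Require Import zify.
Import GRing.Theory.

Set Implicit Arguments.
Unset Strict Implicit.
Unset Printing Implicit Defensive.

Lemma card_tuple_cons (T : finType) n (P : pred (seq T)) :
  #|[pred t : n.+1.-tuple T | P t]| = \sum_(x : T) #|[pred t : n.-tuple T | P (x :: t)]|.
Proof.
rewrite -sum1_card (reindex (fun p : T * n.-tuple T => cons_tuple p.1 p.2)) /=.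
  under [RHS]eq_bigr => x _ do rewrite -sum1_card.
  by rewrite pair_big_dep; apply: eq_bigl => -[x t]; rewrite !inE.
exists (fun t => (thead t, behead_tuple t)) => [[x t] _ | t _].
  by congr pair; apply: val_inj.
by rewrite [RHS]tuple_eta; apply: val_inj.
Qed.

Local Open Scope ring_scope.

Lemma memv_sum_term (K : fieldType) (V : vectType K) (I : finType) (U : {vspace V})
    (F : I -> V) c :
  \sum_i F i \in U -> (forall i, i != c -> F i \in U) -> F c \in U.
Proof.
move=> sumF others; rewrite (bigD1 c) //= in sumF.
have others_sum : \sum_(i | i != c) F i \in U by apply: memv_suml.
by rewrite -(rpredDr _ others_sum).
Qed.

Lemma dimv_sum_line_le (K : fieldType) (V : vectType K) (I : finType) (P : pred I)
    (f : I -> V) :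
  (forall i, ~~ P i -> f i = 0) -> (\dim (\sum_i <[f i]>) <= #|P|)%N.
Proof.
move=> f0; apply: leq_trans (dimv_leq_sum _ _ _) _.
rewrite -sum1_card [X in (_ <= X)%N]big_mkcond /=; apply: leq_sum => i _.
by rewrite dim_vline; case: (boolP (i \in P)) => [_|/f0->]; rewrite ?leq_b1 ?eqxx.
Qed.

Local Close Scope ring_scope.

(* [ord_enum 7] does not reduce under [vm_compute] (its elements carry opaque
   proofs), so finite checks over ['I_7] run over this list instead. *)
Definition ord7_enum : seq 'I_7 :=
  [:: ord0; Ordinal (isT : 1 < 7); Ordinal (isT : 2 < 7); Ordinal (isT : 3 < 7);
      Ordinal (isT : 4 < 7); Ordinal (isT : 5 < 7); ord_max].

Lemma mem_ord7_enum (i : 'I_7) : i \in ord7_enum.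
Proof. by case: i => -[|[|[|[|[|[|[|//]]]]]]]. Qed.

Lemma ord7_all (P : pred 'I_7) : all P ord7_enum -> forall i, P i.
Proof. by move=> /allP allP_i i; apply: allP_i; apply: mem_ord7_enum. Qed.

Lemma ord7_all2 (P : 'I_7 -> 'I_7 -> bool) :
  all (fun i => all (P i) ord7_enum) ord7_enum -> forall i j, P i j.
Proof. by move=> /ord7_all allP_i i; apply/ord7_all/allP_i. Qed.

Lemma ord7_all3 (P : 'I_7 -> 'I_7 -> 'I_7 -> bool) :
  all (fun i => all (fun j => all (P i j) ord7_enum) ord7_enum) ord7_enum ->
  forall i j l, P i j l.
Proof. by move=> /ord7_all2 allP_ij i j; apply/ord7_all/allP_ij. Qed.

Lemma eps_cycle (i j l : 'I_7) : eps l i j = eps i j l.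
Proof. by apply/eqP; move: i j l; apply: ord7_all3; vm_compute. Qed.

Definition word := seq 'I_7.

(* On words of equal length, comparing base-7 values is comparing lexicographically. *)
Definition code (w : word) : nat := foldl (fun c (x : 'I_7) => c * 7 + x) 0 w.

Lemma foldl_code c w :
  foldl (fun c (x : 'I_7) => c * 7 + x) c w = c * 7 ^ size w + code w.
Proof.
elim: w c => [|x w IHw] c /=; first by rewrite muln1 addn0.
by rewrite /code /= !IHw expnS; lia.
Qed.

Lemma code_cat u v : code (u ++ v) = code u * 7 ^ size v + code v.
Proof. by rewrite {1}/code foldl_cat foldl_code. Qed.

Lemma code_cat_lt u v s1 s2 : size s1 = size s2 -> code s1 < code s2 ->
  code (u ++ s1 ++ v) < code (u ++ s2 ++ v).
Proof.
move=> eq_size lt_s; rewrite !code_cat !size_cat eq_size ltn_add2l ltn_add2r.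
by rewrite ltn_pmul2r // expn_gt0.
Qed.

(* Letter [x_(i+1)] is [i : 'I_7].  The leading word of [r_(i+1)] is [x7 x_(6-i)]
   for [i < 6], and [x6 x1] for [r_7]. *)
Definition sub5 (x : 'I_7) : 'I_7 :=
  Ordinal (leq_ltn_trans (leq_subr x 5) (isT : 5 < 7)).

Definition lead1 (i : 'I_7) : 'I_7 :=
  if i == ord_max then Ordinal (isT : 5 < 7) else ord_max.
Definition lead2 (i : 'I_7) : 'I_7 := if i == ord_max then ord0 else sub5 i.
Definition lead_word (i : 'I_7) : word := [:: lead1 i; lead2 i].

Definition is_lead (x y : 'I_7) : bool :=
  (x == ord_max) && (y != ord_max) || (x == lead1 ord_max) && (y == ord0).
Definition lead_rel (x y : 'I_7) : 'I_7 := if x == ord_max then sub5 y else ord_max.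

Lemma is_lead_word i :
  is_lead (lead1 i) (lead2 i) && (lead_rel (lead1 i) (lead2 i) == i).
Proof. by move: i; apply: ord7_all; vm_compute. Qed.

Lemma lead_word_rel x y : is_lead x y -> lead_word (lead_rel x y) = [:: x; y].
Proof.
suff lead_relP : forall x y, is_lead x y ==> (lead_word (lead_rel x y) == [:: x; y]).
  by move=> /(implyP (lead_relP x y))/eqP.
by apply: ord7_all2; vm_compute.
Qed.

Lemma eps_lead_sqr i : (eps i (lead1 i) (lead2 i) ^+ 2 = 1)%R.
Proof. by apply/eqP; move: i; apply: ord7_all; vm_compute. Qed.

Lemma eps_lead_max i m l : (eps i m l != 0)%R -> [:: m; l] != lead_word i ->
  code [:: m; l] < code (lead_word i).
Proof.
suff leadP : forall i m l, (eps i m l != 0)%R ==> ([:: m; l] != lead_word i) ==>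
    (code [:: m; l] < code (lead_word i)).
  by move=> /(implyP (leadP i m l))/implyP.
by apply: ord7_all3; vm_compute.
Qed.

Lemma lead_word_overlap i j : lead2 j = lead1 i -> j = ord0 /\ i = ord_max.
Proof.
suff overlapP : forall i j, (lead2 j == lead1 i) ==> (j == ord0) && (i == ord_max).
  by move=> /eqP/(implyP (overlapP i j))/andP[/eqP-> /eqP->].
by apply: ord7_all2; vm_compute.
Qed.

(* x7 x6 x1, where the leading words of r_1 and r_7 overlap. *)
Definition overlap_word : word := ord_max :: lead_word ord_max.

Lemma overlap_word_ord0 : lead_word ord0 ++ [:: ord0] = overlap_word.
Proof. by apply/eqP; vm_compute. Qed.

Lemma overlap_word_maxl i :
  i != ord0 -> code (lead_word i ++ [:: i]) < code overlap_word.
Proof. by apply/implyP; move: i; apply: ord7_all; vm_compute. Qed.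

Lemma overlap_word_maxr i :
  i != ord_max -> code (i :: lead_word i) < code overlap_word.
Proof. by apply/implyP; move: i; apply: ord7_all; vm_compute. Qed.

Fixpoint first_lead (w : word) : option (word * 'I_7 * word) :=
  if w is x :: w' then
    if w' is y :: v then
      if is_lead x y then Some ([::], lead_rel x y, v)
      else omap (fun d => (x :: d.1.1, d.1.2, d.2)) (first_lead w')
    else None
  else None.

Definition normal (w : word) : bool := first_lead w == None.

Lemma first_lead_cons2 x y w : first_lead [:: x, y & w] =
  if is_lead x y then Some ([::], lead_rel x y, w)
  else omap (fun d => (x :: d.1.1, d.1.2, d.2)) (first_lead (y :: w)).
Proof. by []. Qed.

Lemma first_leadP w u i v : first_lead w = Some (u, i, v) -> w = u ++ lead_word i ++ v.
Proof.
elim: w u i v => [|x [|y w] IHw] u i v //; rewrite first_lead_cons2.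
case: ifP => [xy [<- <- <-] | _]; first by rewrite (lead_word_rel xy).
by case: first_lead IHw => // -[[u' i'] v'] /(_ u' i' v' erefl) -> [<- <- <-].
Qed.

Lemma first_lead_cat u i v : first_lead (rcons u (lead1 i)) = None ->
  first_lead (u ++ lead_word i ++ v) = Some (u, i, v).
Proof.
elim: u => [_|x u IHu].
  by rewrite first_lead_cons2; have /andP[-> /eqP->] := is_lead_word i.
rewrite rcons_cons cat_cons.
have [y [w1 [w2 [Eu1 Eu2]]]] :
    exists y w1 w2, rcons u (lead1 i) = y :: w1 /\ u ++ lead_word i ++ v = y :: w2.
  by case: (u) => [|y u']; do 3 eexists.
rewrite Eu1 Eu2 in IHu *; rewrite 2!first_lead_cons2; case: ifP => // _.
by case: (first_lead (y :: w1)) IHu => // /(_ erefl) ->.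
Qed.

Lemma normal_cons2 x y w : normal [:: x, y & w] = ~~ is_lead x y && normal (y :: w).
Proof. by rewrite /normal first_lead_cons2; case: is_lead => //; case: first_lead. Qed.

Definition normal_count n := #|[pred t : n.-tuple 'I_7 | normal t]|.

Local Open Scope ring_scope.

Section DegreeComponent.

Variables (k : fieldType) (n : nat).
Implicit Types (S : {vspace Fdeg k n}) (i j : 'I_7) (u v w : word).
Local Notation relv := (relvec k n).

Definition wvec (w : word) : Fdeg k n :=
  [ffun t : n.-tuple 'I_7 => ((val t == w)%:R : k)].

Lemma wvec_eq0 w : size w != n -> wvec w = 0.
Proof.
move=> size_w; apply/ffunP => t; rewrite !ffunE; case: eqP => // Et.
by move: size_w; rewrite -Et size_tuple eqxx.
Qed.

Lemma ffun_wvec_sum (f : Fdeg k n) : f = \sum_(t : n.-tuple 'I_7) f t *: wvec t.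
Proof.
apply/ffunP => t; rewrite sum_ffunE (bigD1 t) //= big1 => [|s neq_st].
  by rewrite !ffunE eqxx addr0 [_ *: _]mulr1.
by rewrite !ffunE (inj_eq val_inj) eq_sym (negPf neq_st) [_ *: _]mulr0.
Qed.

Lemma relvecE i u v : relv i u v =
  \sum_m \sum_l (eps i m l)%:~R *: wvec (u ++ [:: m; l] ++ v).
Proof.
apply/ffunP => t; rewrite !ffunE sum_ffunE; apply: eq_bigr => m _.
by rewrite sum_ffunE; apply: eq_bigr => l _; rewrite !ffunE.
Qed.

Lemma relvec_eq0 i u v : size (u ++ lead_word i ++ v) != n -> relv i u v = 0.
Proof.
move=> size_w; rewrite relvecE big1 // => m _; rewrite big1 // => l _.
by rewrite wvec_eq0 ?scaler0 //; move: size_w; rewrite !size_cat.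
Qed.

Lemma relvec_in_ideal i u v :
  size (u ++ lead_word i ++ v) = n -> relv i u v \in ideal_deg k n.
Proof.
move=> size_w; have size_u : (size u < n.+1)%N by rewrite -size_w size_cat ltnS leq_addr.
have size_v : (size v < n.+1)%N.
  by rewrite -size_w !size_cat addnA ltnS leq_addl.
rewrite memvE; apply: (sumv_sup i) => //; apply: (sumv_sup (Ordinal size_u)) => //.
apply: (sumv_sup (in_tuple u)) => //; apply: (sumv_sup (Ordinal size_v)) => //.
by apply: (sumv_sup (in_tuple v)) => //; rewrite -memvE memv_line.
Qed.

(* Both sides expand [u r_j w r_i v]. *)
Lemma relvec_disjoint_swap i j u w v :
  \sum_m \sum_l (eps j m l)%:~R *: relv i (u ++ [:: m; l] ++ w) v =
  \sum_p \sum_q (eps i p q)%:~R *: relv j u (w ++ [:: p; q] ++ v).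
Proof.
transitivity (\sum_m \sum_l \sum_p \sum_q ((eps j m l)%:~R * (eps i p q)%:~R) *:
   wvec (u ++ [:: m; l] ++ w ++ [:: p; q] ++ v)).
  apply: eq_bigr => m _; apply: eq_bigr => l _; rewrite relvecE scaler_sumr.
  apply: eq_bigr => p _; rewrite scaler_sumr; apply: eq_bigr => q _.
  by rewrite scalerA -!catA.
under eq_bigr => m _ do
  (rewrite exchange_big; under eq_bigr => p _ do rewrite exchange_big).
rewrite exchange_big; apply: eq_bigr => p _; rewrite exchange_big; apply: eq_bigr => q _.
rewrite relvecE scaler_sumr; apply: eq_bigr => m _; rewrite scaler_sumr.
by apply: eq_bigr => l _; rewrite scalerA mulrC.
Qed.

(* The identity [sum_i r_i x_i = sum_i x_i r_i], between [u] and [v]. *)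
Lemma relvec_overlap_swap u v :
  \sum_i relv i (rcons u i) v = \sum_i relv i u (i :: v).
Proof.
rewrite (eq_bigr _ (fun i _ => relvecE i _ v)) (eq_bigr _ (fun i _ => relvecE i u _)).
rewrite [RHS]exchange_big; apply: eq_bigr => m _; rewrite [RHS]exchange_big.
apply: eq_bigr => l _; apply: eq_bigr => i _.
by rewrite [in RHS]eps_cycle -cats1 -catA.
Qed.

Lemma eps_lead_neq0 i : (eps i (lead1 i) (lead2 i))%:~R != 0 :> k.
Proof.
apply/eqP => eps0; have := congr1 (fun z : int => z%:~R : k) (eps_lead_sqr i).
by rewrite /= rmorphXn /= eps0 expr0n /= => /eqP; rewrite eq_sym oner_eq0.
Qed.

Lemma lead_term_mem S i (X : 'I_7 -> 'I_7 -> Fdeg k n) :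
  \sum_m \sum_l (eps i m l)%:~R *: X m l \in S ->
  (forall m l, (code [:: m; l] < code (lead_word i))%N -> X m l \in S) ->
  X (lead1 i) (lead2 i) \in S.
Proof.
move=> sumX lowX; rewrite pair_big /= in sumX.
suff: (eps i (lead1 i) (lead2 i))%:~R *: X (lead1 i) (lead2 i) \in S.
  by rewrite rpredZeq (negPf (eps_lead_neq0 i)).
apply: (memv_sum_term (c := (lead1 i, lead2 i)) sumX) => -[m l] /= ml.
have [-> | eps_ml] := eqVneq (eps i m l) 0; first by rewrite scale0r mem0v.
apply/memvZ/lowX/eps_lead_max => //.
by move: ml; rewrite /lead_word !eqseq_cons andbT xpair_eqE.
Qed.

Lemma relvec_overlap_mem S u v :
  (forall i u1 v1, (code (u1 ++ lead_word i ++ v1) < code (u ++ overlap_word ++ v))%N ->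
     relv i u1 v1 \in S) ->
  relv ord0 u (ord0 :: v) \in S -> relv ord_max (rcons u ord_max) v \in S.
Proof.
move=> lowS shiftS.
have sum_rightS : \sum_i relv i u (i :: v) \in S.
  apply: memv_suml => i _; have [-> // | i_neq0] := eqVneq i ord0.
  apply: lowS; rewrite -[i :: v]cat1s (catA (lead_word i)).
  by apply: code_cat_lt; rewrite // overlap_word_maxl.
have other_leftS : \sum_(i | i != ord_max) relv i (rcons u i) v \in S.
  apply: memv_suml => i i_neq_max; apply: lowS; rewrite cat_rcons.
  by apply: (code_cat_lt _ _ (s1 := i :: lead_word i)); rewrite // overlap_word_maxr.
rewrite -relvec_overlap_swap (bigD1 ord_max) //= in sum_rightS.
by rewrite -(rpredDr _ other_leftS).
Qed.

Lemma relvec_disjoint_mem S i j u w v :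
  (forall i1 u1 v1, (code (u1 ++ lead_word i1 ++ v1) <
                     code (u ++ lead_word j ++ w ++ lead_word i ++ v))%N ->
     relv i1 u1 v1 \in S) ->
  relv j u (w ++ lead_word i ++ v) \in S -> relv i (u ++ lead_word j ++ w) v \in S.
Proof.
move=> lowS shiftS.
apply: (lead_term_mem (X := fun m l => relv i (u ++ [:: m; l] ++ w) v)) => [|m l lt_ml].
  rewrite relvec_disjoint_swap; apply: memv_suml => p _; apply: memv_suml => q _.
  have [-> | eps_pq] := eqVneq (eps i p q) 0; first by rewrite scale0r mem0v.
  apply: memvZ; have [-> // | pq_neq] := eqVneq [:: p; q] (lead_word i).
  have catA3 s : u ++ lead_word j ++ w ++ s = (u ++ lead_word j ++ w) ++ s.
    by rewrite !catA.
  apply: lowS; rewrite !catA3.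
  by apply: code_cat_lt; rewrite // eps_lead_max.
apply: lowS; rewrite -!catA.
by apply: code_cat_lt.
Qed.

(* One relation per non-normal word: [u r_i v] at its leftmost leading word. *)
Definition first_rel (t : n.-tuple 'I_7) : Fdeg k n :=
  if first_lead t is Some (u, i, v) then relv i u v else 0.

Definition first_rel_span : {vspace Fdeg k n} := (\sum_t <[first_rel t]>)%VS.

Lemma relvec_first_rel i u v : size (u ++ lead_word i ++ v) = n ->
  first_lead (rcons u (lead1 i)) = None -> relv i u v \in first_rel_span.
Proof.
move=> /eqP size_w first_u; rewrite memvE; apply: (sumv_sup (Tuple size_w)) => //.
by rewrite -memvE /first_rel /= first_lead_cat // memv_line.
Qed.

(* The diamond lemma, by induction on the leading word of [u r_i v], then on
   [size u].  The leftmost leading word of [rcons u (lead1 i)], if any, either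
   overlaps [lead_word i] inside x7 x6 x1, or lies inside [u]. *)
Lemma relvec_in_first_rel_span i u v : relv i u v \in first_rel_span.
Proof.
suff: forall N i u v, (code (u ++ lead_word i ++ v) < N)%N ->
    relv i u v \in first_rel_span.
  by apply; apply: ltnSn.
elim=> [//|N IHN].
suff: forall s i u v, (size u < s)%N -> (code (u ++ lead_word i ++ v) <= N)%N ->
    relv i u v \in first_rel_span.
  by move=> IHs {}i {}u {}v; rewrite ltnS; apply: IHs (ltnSn _).
elim=> [//|s IHs] {}i {}u {}v; rewrite ltnS => size_u code_w.
have lowS i1 u1 v1 :
    (code (u1 ++ lead_word i1 ++ v1) < code (u ++ lead_word i ++ v))%N ->
    relv i1 u1 v1 \in first_rel_span.
  by move=> lt_code; apply: IHN; apply: leq_trans code_w.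
have [size_w | /relvec_eq0->] := eqVneq (size (u ++ lead_word i ++ v)) n;
  last exact: mem0v.
case first_u: (first_lead (rcons u (lead1 i))) => [[[u' j] w]|]; last first.
  exact: relvec_first_rel.
move/first_leadP: first_u; case/lastP: w => [|w x].
  have -> : u' ++ lead_word j ++ [::] = rcons (rcons u' (lead1 j)) (lead2 j).
    by rewrite cats0 -!cats1 -catA.
  move=> /rcons_inj[u_eq /esym/lead_word_overlap[j0 imax]]; subst u i j.
  rewrite cat_rcons in lowS; apply: relvec_overlap_mem => //.
  apply: IHs; first by rewrite size_rcons in size_u.
  rewrite cat_rcons in code_w.
  by rewrite -[ord0 :: v]cat1s (catA (lead_word ord0)) overlap_word_ord0.
rewrite -2!rcons_cat => /rcons_inj[u_eq _]; subst u.
rewrite -catA in lowS code_w; apply: relvec_disjoint_mem => //.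
by apply: IHs code_w; apply: leq_trans size_u; rewrite size_cat /= addnS ltnS leq_addr.
Qed.

Definition normal_vec (t : n.-tuple 'I_7) : Fdeg k n :=
  if normal t then wvec t else 0.

Definition normal_span : {vspace Fdeg k n} := (\sum_t <[normal_vec t]>)%VS.

Lemma wvec_in_ideal_normal w :
  size w = n -> wvec w \in (ideal_deg k n + normal_span)%VS.
Proof.
suff: forall N w, (code w < N)%N -> size w = n ->
    wvec w \in (ideal_deg k n + normal_span)%VS.
  by apply; apply: ltnSn.
elim=> [//|N IHN] {}w; rewrite ltnS => code_w /eqP size_w.
case first_w: (first_lead w) => [[[u i] v]|].
  have w_eq := first_leadP first_w.
  have: relv i u v \in (ideal_deg k n + normal_span)%VS.
    by apply/(subvP (addvSl _ _))/relvec_in_ideal; rewrite -w_eq; apply/eqP.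
  rewrite relvecE w_eq => /lead_term_mem; apply => m l lt_ml.
  apply: IHN; last by move/eqP: size_w; rewrite w_eq !size_cat.
  by apply: leq_trans code_w; rewrite w_eq; apply: code_cat_lt.
apply/(subvP (addvSr _ _)); rewrite memvE; apply: (sumv_sup (Tuple size_w)) => //.
by rewrite -memvE /normal_vec /normal /= first_w memv_line.
Qed.

Lemma dim_Fdeg : \dim (fullv : {vspace Fdeg k n}) = (7 ^ n)%N.
Proof. by rewrite dimvf /dim /= card_tuple card_ord muln1. Qed.

Lemma dim_ideal_le :
  (\dim (ideal_deg k n) <= #|[pred t : n.-tuple 'I_7 | ~~ normal t]|)%N.
Proof.
have ideal_sub : (ideal_deg k n <= first_rel_span)%VS.
  apply/subv_sumP => i _; apply/subv_sumP => p _; apply/subv_sumP => u _.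
  apply/subv_sumP => q _; apply/subv_sumP => v _.
  by rewrite -memvE relvec_in_first_rel_span.
apply: leq_trans (dimvS ideal_sub) (dimv_sum_line_le _) => t.
by rewrite inE negbK /first_rel => /eqP->.
Qed.

Lemma dim_ideal_ge : (7 ^ n <= \dim (ideal_deg k n) + normal_count n)%N.
Proof.
have full_sub : (fullv <= ideal_deg k n + normal_span)%VS.
  apply/subvP => f _; rewrite [f]ffun_wvec_sum; apply: memv_suml => t _.
  by apply/memvZ/wvec_in_ideal_normal; rewrite size_tuple.
rewrite -dim_Fdeg; apply: leq_trans (dimvS full_sub) _.
apply: leq_trans (dimv_add_leqif _ _).1 _; rewrite leq_add2l.
by apply: dimv_sum_line_le => t; rewrite inE /normal_vec => /negPf->.
Qed.

Lemma hilb_normal_count : hilb k n = normal_count n.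
Proof.
have card_split :
    (normal_count n + #|[pred t : n.-tuple 'I_7 | ~~ normal t]| = 7 ^ n)%N.
  by rewrite cardC card_tuple card_ord.
have := dim_ideal_le; have := dim_ideal_ge; rewrite /hilb dim_Fdeg; lia.
Qed.

End DegreeComponent.

Local Close Scope ring_scope.

Definition start_count n (a : 'I_7) := #|[pred t : n.-tuple 'I_7 | normal (a :: t)]|.

Lemma normal_count_S n : normal_count n.+1 = \sum_a start_count n a.
Proof. exact: card_tuple_cons. Qed.

Lemma normal_count_0 : normal_count 0 = 1.
Proof. by apply: (eq_card1 (x := [tuple])) => t; rewrite tuple0 !inE eqxx. Qed.

Lemma start_count_0 a : start_count 0 a = 1.
Proof. by apply: (eq_card1 (x := [tuple])) => t; rewrite tuple0 !inE eqxx. Qed.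

Lemma start_count_S n a : start_count n.+1 a = \sum_(y | ~~ is_lead a y) start_count n y.
Proof.
rewrite /start_count (card_tuple_cons _ (fun s => normal (a :: s))) [RHS]big_mkcond.
apply: eq_bigr => y _.
case: (boolP (is_lead a y)) => /= [lead_ay | /negPf lead_ay].
  by apply: eq_card0 => t; rewrite !inE normal_cons2 lead_ay.
by apply: eq_card => t; rewrite !inE normal_cons2 lead_ay.
Qed.

(* x1, ..., x5 may be followed by any letter, x6 by any but x1, x7 only by x7. *)
Lemma normal_cons_low (a : 'I_7) w : a < 5 -> normal (a :: w) = normal w.
Proof.
move=> lt_a5; case: w => [|y w] //; rewrite normal_cons2 /is_lead.
have /negPf-> : a != ord_max by apply: contraTneq lt_a5 => ->.
by have /negPf-> : a != lead1 ord_max by apply: contraTneq lt_a5 => ->.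
Qed.

Lemma start_count_low n (a : 'I_7) : a < 5 -> start_count n a = normal_count n.
Proof. by move=> lt_a5; apply: eq_card => t; rewrite !inE normal_cons_low. Qed.

Lemma start_count_max n : start_count n ord_max = 1.
Proof.
elim: n => [|n IHn]; first exact: start_count_0.
rewrite start_count_S (big_pred1 ord_max) // => y.
by rewrite /is_lead eqxx /= orbF negbK.
Qed.

Lemma start_count_x6 n (a : 'I_7) :
  a = 5 :> nat -> start_count n.+1 a + normal_count n = normal_count n.+1.
Proof.
move=> a5; rewrite start_count_S normal_count_S [RHS](bigD1 ord0) //=.
rewrite -(start_count_low n (isT : (ord0 : 'I_7) < 5)) addnC; congr (_ + _).
by apply: eq_bigl => y; rewrite /is_lead -!(inj_eq val_inj) /= a5.
Qed.

Lemma normal_count_rec n : normal_count n.+2 + normal_count n = 6 * normal_count n.+1 + 1.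
Proof.
rewrite normal_count_S 2!big_ord_recr start_count_max.
rewrite (eq_bigr (fun _ => normal_count n.+1)) => [|a _]; last first.
  by apply: start_count_low; apply: ltn_ord a.
have := start_count_x6 n (a := widen_ord (leqnSn 6) ord_max) erefl.
rewrite sum_nat_const card_ord /=; lia.
Qed.

Lemma normal_count_1 : normal_count 1 = 7.
Proof.
rewrite normal_count_S (eq_bigr (fun _ => 1)) => [|a _]; last exact: start_count_0.
by rewrite sum_nat_const card_ord.
Qed.

Local Open Scope ring_scope.

Theorem proposition4p2 (k : fieldType) (n : nat) :
  \sum_(i < n.+1) denom_coef i * ((hilb k (n - i))%:Z) = ((n == 0)%N)%:Z.
Proof.
under eq_bigr => i _ do rewrite hilb_normal_count.
have rec0 := normal_count_rec 0; rewrite normal_count_0 normal_count_1 in rec0.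
case: n => [|[|[|n]]]; rewrite !big_ord_recl ?big_ord0 /=.
- by rewrite normal_count_0.
- by rewrite normal_count_0 normal_count_1.
- rewrite normal_count_0 normal_count_1 subn0 /denom_coef /=; lia.
rewrite big1 => [|i _]; last by rewrite /denom_coef /bump /= nth_nil mul0r.
have := normal_count_rec n; have := normal_count_rec n.+1.
rewrite /denom_coef /bump /= !subSS !subn0; lia.
Qed.
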